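(* Let $\mathcal{H}$ be an LSH family on $\mathbb{R}^d$ with finite range $\{1,\dots,R\}$ and collision probability $k(x,y)=\Pr_{h\sim\mathcal{H}}[h(x)=h(y)]$. Fix an integer $p\ge 1$, a dataset $\mathcal{D}\subset\mathbb{R}^d$ with $N=|\mathcal{D}|$, a query $q$, and $\epsilon,\delta\in(0,1)$. Define $$K(q)=\frac1N\sum_{x\in\mathcal{D}}k^p(x,q),\qquad \widetilde K(q)=\frac1N\sum_{x\in\mathcal{D}}k^{p/2}(x,q),$$ and assume $K(q)>0$. Then there are absolute constants $c_1,c_2>0$ such that a RACE sketch with $L=g\cdot m$ rows, where $g\ge c_1\log(1/\delta)$ and $m\ge c_2\left(\widetilde K(q)/K(q)\right)^2\epsilon^{-2}$ (so $L=O\!\left(\left(\frac{\widetilde K(q)}{K(q)}\right)^2\frac{1}{\epsilon^2}\log\frac1\delta\right)$), yields a median-of-means estimate $\widehat K(q)$ satisfying $(1-\epsilon)K(q)\le \widehat K(q)\le(1+\epsilon)K(q)$ with probability at least $1-\delta$. The sketch consists of $O(LR^p)$ integer counters.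
   Context: RACE sketch: choose $L$ independent hash functions $h_1,\dots,h_L$, each obtained by concatenating $p$ independent draws from $\mathcal{H}$, so each $h_l$ maps into a set of size $R^p$ and $\Pr[h_l(x)=h_l(y)]=k^p(x,y)$. The sketch is an integer array $A$ with $L$ rows and $R^p$ columns, initialized to zero; for each $x\in\mathcal{D}$ and each $l=1,\dots,L$, the counter $A[l,h_l(x)]$ is incremented by one. Median-of-means query: partition the $L$ rows into $g$ groups of $m$ rows each; for each group compute the average of $A[l,h_l(q)]/N$ over the rows $l$ in the group; output $\widehat K(q)$ as the median of these $g$ group averages. *)

From Stdlib Require Import Reals List Arith.
Import ListNotations.
Open Scope R_scope.

Definition Rsum (l : list R) : R := fold_right Rplus 0 l.
Definition Rprod (l : list R) : R := fold_right Rmult 1 l.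

(** An LSH family, given as a finitely supported distribution:
    hash function [hs i] is drawn with probability [w i], for [i < n]. *)
Definition collision (n : nat) (hs : nat -> list R -> nat) (w : nat -> R)
  (x y : list R) : R :=
  Rsum (map (fun i => w i * (if Nat.eq_dec (hs i x) (hs i y) then 1 else 0))
            (seq 0 n)).

Definition Kp n hs w (p : nat) (D : list (list R)) (q : list R) : R :=
  / INR (length D) * Rsum (map (fun x => (collision n hs w x q) ^ p) D).
Definition Ktilde n hs w (p : nat) (D : list (list R)) (q : list R) : R :=
  / INR (length D) * Rsum (map (fun x => sqrt ((collision n hs w x q) ^ p)) D).

Fixpoint all_seqs (n k : nat) : list (list nat) :=
  match k with
  | O => [[]]
  | S k' => flat_map (fun s => map (fun i => i :: s) (seq 0 n)) (all_seqs n k')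
  end.

(** A draw [sigma] (length L*p) fixes all L*p independent hash draws;
    draw j of row l is entry l*p+j.  The row hash h_l is the concatenation
    (tuple) of its p draws; its value is a column index in [R]^p. *)
Definition row_hash (hs : nat -> list R -> nat) (p : nat) (sigma : list nat)
  (l : nat) (x : list R) : list nat :=
  map (fun j => hs (nth (l * p + j) sigma 0%nat) x) (seq 0 p).

Definition counter hs p (D : list (list R)) sigma (l : nat) (c : list nat) : nat :=
  length (filter (fun x => if list_eq_dec Nat.eq_dec (row_hash hs p sigma l x) c
                           then true else false) D).

Fixpoint insertR (x : R) (l : list R) : list R :=
  match l with
  | [] => [x]
  | y :: t => if Rle_dec x y then x :: y :: t else y :: insertR x t
  end.
Definition sortR (l : list R) : list R := fold_right insertR [] l.
Definition median (l : list R) : R := nth (length l / 2) (sortR l) 0.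

Definition group_mean hs p (D : list (list R)) (q : list R) sigma (m j : nat) : R :=
  / INR m * Rsum (map (fun i => let l := (j * m + i)%nat in
       INR (counter hs p D sigma l (row_hash hs p sigma l q)) / INR (length D))
     (seq 0 m)).
Definition race_estimate hs p D q sigma (g m : nat) : R :=
  median (map (group_mean hs p D q sigma m) (seq 0 g)).

Definition prob_draws (n : nat) (w : nat -> R) (len : nat)
  (E : list nat -> Prop) (Edec : forall s, {E s} + {~ E s}) : R :=
  Rsum (map (fun s => Rprod (map w s) * (if Edec s then 1 else 0))
            (all_seqs n len)).

Definition within_eps hs p D q (g m : nat) (eps Kq : R) (s : list nat) : Prop :=
  (1 - eps) * Kq <= race_estimate hs p D q s g m <= (1 + eps) * Kq.

Lemma within_eps_dec hs p D q g m eps Kq :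
  forall s, {within_eps hs p D q g m eps Kq s} + {~ within_eps hs p D q g m eps Kq s}.
Proof.
  intro s; unfold within_eps.
  destruct (Rle_dec ((1 - eps) * Kq) (race_estimate hs p D q s g m)) as [H1|H1];
  destruct (Rle_dec (race_estimate hs p D q s g m) ((1 + eps) * Kq)) as [H2|H2];
  [left; split; assumption | right; intros [_ H]; contradiction
  | right; intros [H _]; contradiction | right; intros [H _]; contradiction].
Defined.

(* Each row of the sketch is an unbiased estimator of K(q): its counter at the
   bucket of q counts the points of D whose concatenated hash collides with that
   of q, and x collides with q with probability k^p(x, q).  Its second moment is
   at most Ktilde(q)^2, because x and y both collide with q with probability at
   most min (k^p(x, q), k^p(y, q)) <= k^{p/2}(x, q) k^{p/2}(y, q).  The rows are
   independent, so by Chebyshev a mean of m >= 16 (Ktilde/K)^2 / eps^2 rows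
   misses [(1 - eps) K, (1 + eps) K] with probability at most 1/16.  The median
   misses only if half of the g independent groups do; Markov's inequality for a
   product of per-group penalties bounds this by 2^-g <= delta once
   g >= log2 (1/delta). *)

From Stdlib Require Import Reals List Arith.
From Stdlib Require Import Lia Lra Sorting.
Import ListNotations.
Open Scope R_scope.

Lemma Rsum_app l1 l2 : Rsum (l1 ++ l2) = Rsum l1 + Rsum l2.
Proof. induction l1 as [|a l1 IH]; simpl; [ring | rewrite IH; ring]. Qed.

Lemma Rsum_map_ext {A} (f g : A -> R) l :
  (forall x, In x l -> f x = g x) -> Rsum (map f l) = Rsum (map g l).
Proof. intro H. f_equal. apply map_ext_in. exact H. Qed.

Lemma Rsum_map_plus {A} (f g : A -> R) l :
  Rsum (map (fun x => f x + g x) l) = Rsum (map f l) + Rsum (map g l).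
Proof. induction l as [|a l IH]; simpl; [ring | rewrite IH; ring]. Qed.

Lemma Rsum_map_scal {A} (c : R) (f : A -> R) l :
  Rsum (map (fun x => c * f x) l) = c * Rsum (map f l).
Proof. induction l as [|a l IH]; simpl; [ring | rewrite IH; ring]. Qed.

Lemma Rsum_map_const {A} (c : R) (l : list A) :
  Rsum (map (fun _ => c) l) = INR (length l) * c.
Proof.
  induction l as [|a l IH]; [simpl; ring|].
  change (length (a :: l)) with (S (length l)). rewrite S_INR. simpl. rewrite IH. ring.
Qed.

Lemma Rsum_map_minus_const {A} (f : A -> R) c l :
  Rsum (map (fun x => f x - c) l) = Rsum (map f l) - INR (length l) * c.
Proof. unfold Rminus. rewrite Rsum_map_plus, Rsum_map_const. ring. Qed.

Lemma Rsum_map_le {A} (f g : A -> R) l :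
  (forall x, In x l -> f x <= g x) -> Rsum (map f l) <= Rsum (map g l).
Proof.
  induction l as [|a l IH]; simpl; intros H; [lra|].
  apply Rplus_le_compat; auto.
Qed.

Lemma Rsum_flat_map {A B} (h : B -> R) (f : A -> list B) l :
  Rsum (map h (flat_map f l)) = Rsum (map (fun a => Rsum (map h (f a))) l).
Proof. induction l as [|a l IH]; simpl; [ring | rewrite map_app, Rsum_app, IH; ring]. Qed.

Lemma Rsum_map_mult {A B} (f : A -> R) (g : B -> R) l l' :
  Rsum (map f l) * Rsum (map g l') =
  Rsum (map (fun x => Rsum (map (fun y => f x * g y) l')) l).
Proof. induction l as [|a l IH]; simpl; [ring|]. rewrite <- IH, Rsum_map_scal. ring. Qed.

Lemma inv_INR_nonneg k : 0 <= / INR k.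
Proof. destruct k; [simpl; rewrite Rinv_0; lra | left; apply Rinv_0_lt_compat, lt_0_INR; lia]. Qed.

Lemma Rprod_nonneg l : Forall (fun x => 0 <= x) l -> 0 <= Rprod l.
Proof. induction 1; simpl; [lra | apply Rmult_le_pos; auto]. Qed.

Definition in_range (a b v : R) : bool :=
  if Rle_dec a v then if Rle_dec v b then true else false else false.

Section Expectation.

Variable n : nat.
Variable w : nat -> R.
Hypothesis w_nonneg : forall i, (i < n)%nat -> 0 <= w i.
Hypothesis w_sum1 : Rsum (map w (seq 0 n)) = 1.

(* Unlike the flat sum of [prob_draws], this recursive form makes the
   independence of disjoint blocks of draws structural ([expect_split]). *)
Fixpoint expect (k : nat) (F : list nat -> R) : R :=
  match k with
  | O => F []
  | S k => Rsum (map (fun i => w i * expect k (fun s => F (i :: s))) (seq 0 n))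
  end.

Lemma expect_ext k F G : (forall s, F s = G s) -> expect k F = expect k G.
Proof.
  revert F G; induction k as [|k IH]; intros F G H; simpl; auto.
  apply Rsum_map_ext; intros i _. f_equal. apply IH. intros; apply H.
Qed.

Lemma expect_plus k F G : expect k (fun s => F s + G s) = expect k F + expect k G.
Proof.
  revert F G; induction k as [|k IH]; intros F G; simpl; auto.
  rewrite <- Rsum_map_plus. apply Rsum_map_ext; intros i _.
  rewrite (IH (fun s => F (i :: s)) (fun s => G (i :: s))). ring.
Qed.

Lemma expect_scal k c F : expect k (fun s => c * F s) = c * expect k F.
Proof.
  revert F; induction k as [|k IH]; intros F; simpl; auto.
  rewrite <- Rsum_map_scal. apply Rsum_map_ext; intros i _.
  rewrite (IH (fun s => F (i :: s))). ring.
Qed.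

Lemma expect_minus k F G : expect k (fun s => F s - G s) = expect k F - expect k G.
Proof.
  unfold Rminus. rewrite expect_plus.
  rewrite (expect_ext _ (fun s => - G s) (fun s => (-1) * G s)) by (intros; ring).
  rewrite expect_scal. ring.
Qed.

Lemma expect_sum {A} k (G : A -> list nat -> R) l :
  expect k (fun s => Rsum (map (fun a => G a s) l)) = Rsum (map (fun a => expect k (G a)) l).
Proof.
  induction l as [|a l IH]; simpl.
  - rewrite (expect_ext _ _ (fun s => 0 * 0)) by (intros; ring).
    rewrite expect_scal. ring.
  - rewrite expect_plus, IH. reflexivity.
Qed.

Lemma expect_const k c : expect k (fun _ => c) = c.
Proof.
  induction k as [|k IH]; simpl; auto.
  rewrite IH, (Rsum_map_ext _ (fun i => c * w i)) by (intros; ring).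
  rewrite Rsum_map_scal, w_sum1. ring.
Qed.

Lemma expect_le k F G : (forall s, F s <= G s) -> expect k F <= expect k G.
Proof.
  revert F G; induction k as [|k IH]; intros F G H; simpl; auto.
  apply Rsum_map_le; intros i Hi. apply in_seq in Hi.
  apply Rmult_le_compat_l; [apply w_nonneg; lia | apply IH; auto].
Qed.

Lemma expect_split a b F G :
  expect (a + b) (fun s => F (firstn a s) * G (skipn a s)) = expect a F * expect b G.
Proof.
  revert F; induction a as [|a IH]; intros F.
  - simpl. apply expect_scal.
  - simpl. rewrite Rmult_comm, <- Rsum_map_scal. apply Rsum_map_ext; intros i _.
    rewrite (IH (fun t => F (i :: t))). ring.
Qed.

Lemma expect_blocks k (Phi : list nat -> R) :
  (forall s, Phi s = Phi (firstn k s)) ->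
  forall g, expect (g * k) (fun s => Rprod (map (fun j => Phi (skipn (j * k) s)) (seq 0 g)))
            = expect k Phi ^ g.
Proof.
  intros Hfirst g; induction g as [|g IH]; [reflexivity|].
  change (S g * k)%nat with (k + g * k)%nat.
  rewrite (expect_ext _ _ (fun s => Phi (firstn k s) *
     (fun t => Rprod (map (fun j => Phi (skipn (j * k) t)) (seq 0 g))) (skipn k s))).
  - rewrite (expect_split k (g * k) Phi
      (fun t => Rprod (map (fun j => Phi (skipn (j * k) t)) (seq 0 g)))), IH.
    reflexivity.
  - intro s. simpl seq. rewrite <- seq_shift. cbn [map Rprod fold_right].
    rewrite map_map, <- Hfirst. unfold Rprod. do 2 f_equal. apply map_ext. intro j.
    rewrite skipn_skipn. do 2 f_equal. lia.
Qed.

Lemma expect_prod_coords (phi : nat -> R) k :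
  expect k (fun s => Rprod (map (fun t => phi (nth t s 0%nat)) (seq 0 k))) =
  Rsum (map (fun i => w i * phi i) (seq 0 n)) ^ k.
Proof.
  induction k as [|k IH]; [reflexivity|].
  simpl expect. simpl pow. rewrite Rmult_comm, <- Rsum_map_scal. apply Rsum_map_ext; intros i _.
  rewrite (expect_ext _ _ (fun s => phi i * Rprod (map (fun t => phi (nth t s 0%nat)) (seq 0 k)))).
  - rewrite expect_scal, IH. ring.
  - intro s. simpl seq. rewrite <- seq_shift, map_map. reflexivity.
Qed.

Lemma Rsum_all_seqs_expect k F :
  Rsum (map (fun s => Rprod (map w s) * F s) (all_seqs n k)) = expect k F.
Proof.
  revert F; induction k as [|k IH]; intros F.
  - simpl. ring.
  - simpl all_seqs. rewrite Rsum_flat_map.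
    rewrite (Rsum_map_ext _ (fun s => Rprod (map w s) *
        Rsum (map (fun i => w i * F (i :: s)) (seq 0 n)))).
    + rewrite IH. simpl. rewrite expect_sum. apply Rsum_map_ext; intros i _.
      apply expect_scal.
    + intros s _. rewrite map_map, <- Rsum_map_scal. apply Rsum_map_ext; intros i _.
      simpl. ring.
Qed.

Lemma prob_draws_expect len E Edec :
  prob_draws n w len E Edec = expect len (fun s => if Edec s then 1 else 0).
Proof. apply Rsum_all_seqs_expect. Qed.

Lemma prob_draws_markov len E Edec Z t :
  0 < t -> (forall s, 0 <= Z s) -> (forall s, ~ E s -> t <= Z s) ->
  1 - expect len Z / t <= prob_draws n w len E Edec.
Proof.
  intros Ht HZ HbadZ. rewrite prob_draws_expect.
  replace (1 - expect len Z / t) with (expect len (fun s => 1 - / t * Z s))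
    by (rewrite expect_minus, expect_scal, expect_const; unfold Rdiv; ring).
  apply expect_le. intro s.
  assert (0 <= / t * Z s) by (apply Rmult_le_pos; [left; apply Rinv_0_lt_compat|]; auto).
  destruct (Edec s) as [_|Hbad]; [lra|].
  assert (1 <= / t * Z s); [|lra].
  rewrite <- (Rinv_l t) by lra. apply Rmult_le_compat_l; [left; apply Rinv_0_lt_compat|]; auto.
Qed.

Lemma expect_chebyshev k X c e : 0 < e ->
  expect k (fun s => if in_range (c - e) (c + e) (X s) then 0 else 1)
  <= expect k (fun s => (X s - c) ^ 2) / e ^ 2.
Proof.
  intro He. assert (He2 : 0 < e ^ 2) by (apply pow_lt; lra).
  unfold Rdiv. rewrite Rmult_comm, <- expect_scal.
  apply expect_le. intro s.
  assert (0 <= / e ^ 2 * (X s - c) ^ 2)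
    by (apply Rmult_le_pos; [left; apply Rinv_0_lt_compat; lra | apply pow2_ge_0]).
  unfold in_range.
  destruct (Rle_dec (c - e) (X s)); [destruct (Rle_dec (X s) (c + e))|]; [lra| |];
    (assert (e ^ 2 <= (X s - c) ^ 2) by nra;
     rewrite <- (Rinv_l (e ^ 2)) by lra; apply Rmult_le_compat_l;
     [left; apply Rinv_0_lt_compat|]; lra).
Qed.

(* The centred rows are independent with mean zero, so cross terms vanish
   and second moments add. *)
Lemma expect_sq_sum_iid_centered p (Y : nat -> list nat -> R) mu V :
  (forall i s, Y (S i) s = Y i (skipn p s)) ->
  (forall s, Y 0%nat s = Y 0%nat (firstn p s)) ->
  expect p (Y 0%nat) = mu -> expect p (fun s => Y 0%nat s ^ 2) <= V ->
  forall m, expect (m * p) (fun s => Rsum (map (fun i => Y i s - mu) (seq 0 m)) ^ 2)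
            <= INR m * V.
Proof.
  intros Hshift Hfirst Hmean Hsq.
  set (A := fun t => Y 0%nat t - mu).
  assert (HA : expect p A = 0).
  { unfold A. rewrite expect_minus, expect_const. lra. }
  assert (HA2 : expect p (fun t => A t ^ 2) <= V).
  { unfold A.
    rewrite (expect_ext _ _ (fun t => Y 0%nat t ^ 2 - (2 * mu) * Y 0%nat t + mu ^ 2))
      by (intros; ring).
    rewrite expect_plus, expect_minus, expect_scal, expect_const, Hmean. nra. }
  induction m as [|m IH]; [simpl; lra|].
  set (B := fun t => Rsum (map (fun i => Y i t - mu) (seq 0 m))).
  change (expect (m * p) (fun t => B t ^ 2) <= INR m * V) in IH.
  assert (Hsplit : forall s, Rsum (map (fun i => Y i s - mu) (seq 0 (S m))) =
                             A (firstn p s) + B (skipn p s)).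
  { intro s. simpl seq. rewrite <- seq_shift. cbn [map Rsum fold_right].
    unfold A, B. rewrite <- Hfirst, map_map. f_equal.
    apply Rsum_map_ext. intros i _. rewrite Hshift. reflexivity. }
  change (S m * p)%nat with (p + m * p)%nat.
  rewrite (expect_ext _ _ (fun s =>
     ((fun t => A t ^ 2) (firstn p s) * (fun _ => 1) (skipn p s)
      + 2 * (A (firstn p s) * B (skipn p s)))
     + (fun _ => 1) (firstn p s) * (fun t => B t ^ 2) (skipn p s))).
  2:{ intro s. rewrite Hsplit. ring. }
  rewrite !expect_plus, expect_scal.
  rewrite (expect_split p (m * p) (fun t => A t ^ 2) (fun _ => 1)),
    (expect_split p (m * p) A B), (expect_split p (m * p) (fun _ => 1) (fun t => B t ^ 2)),
    !expect_const, HA, S_INR.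
  lra.
Qed.

End Expectation.

Lemma length_insertR x l : length (insertR x l) = S (length l).
Proof. induction l as [|y l IH]; simpl; auto. destruct (Rle_dec x y); simpl; auto. Qed.

Lemma length_sortR l : length (sortR l) = length l.
Proof. induction l as [|x l IH]; simpl; auto. rewrite length_insertR; auto. Qed.

Lemma count_insertR (f : R -> bool) x l :
  length (filter f (insertR x l)) = ((if f x then 1 else 0) + length (filter f l))%nat.
Proof.
  induction l as [|y l IH]; simpl.
  - destruct (f x); reflexivity.
  - destruct (Rle_dec x y); simpl.
    + destruct (f x), (f y); simpl; lia.
    + destruct (f y); simpl; rewrite IH; destruct (f x); simpl; lia.
Qed.

Lemma count_sortR (f : R -> bool) l : length (filter f (sortR l)) = length (filter f l).
Proof.
  induction l as [|x l IH]; simpl; auto.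
  rewrite count_insertR, IH. destruct (f x); reflexivity.
Qed.

Lemma Forall_insertR (P : R -> Prop) x l : P x -> Forall P l -> Forall P (insertR x l).
Proof.
  intros Hx Hl; induction Hl as [|y l Hy Hl IH]; simpl; auto.
  destruct (Rle_dec x y); auto.
Qed.

Lemma sorted_insertR x l : StronglySorted Rle l -> StronglySorted Rle (insertR x l).
Proof.
  induction 1 as [|y l Hl IH Hy]; simpl; [repeat constructor|].
  destruct (Rle_dec x y) as [Hxy|Hxy].
  - constructor; [constructor; auto|].
    constructor; auto. eapply Forall_impl; [|exact Hy]. simpl; intros; lra.
  - constructor; auto. apply Forall_insertR; auto. lra.
Qed.

Lemma sorted_sortR l : StronglySorted Rle (sortR l).
Proof. induction l; simpl; [constructor | apply sorted_insertR; auto]. Qed.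

Section MedianTrick.

Variables a b : R.

Let out_of_range v := negb (in_range a b v).

Lemma sorted_nth_below_count l k : StronglySorted Rle l -> (k < length l)%nat ->
  nth k l 0 < a -> (k + 1 <= length (filter out_of_range l))%nat.
Proof.
  revert k; induction l as [|y l IH]; intros k Hs Hk Hlt; simpl in *; [lia|].
  inversion Hs as [|? ? Hl Hy]; subst.
  assert (Hya : y < a).
  { destruct k as [|k]; auto.
    apply Rle_lt_trans with (nth k l 0); auto.
    rewrite Forall_forall in Hy. apply Hy, nth_In. lia. }
  assert (Hbad : out_of_range y = true).
  { unfold out_of_range, in_range. destruct (Rle_dec a y); [lra | reflexivity]. }
  rewrite Hbad. simpl. destruct k as [|k]; [lia|].
  specialize (IH k Hl ltac:(lia) Hlt). lia.
Qed.

Lemma sorted_nth_above_count l k : StronglySorted Rle l -> (k < length l)%nat ->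
  b < nth k l 0 -> (length l - k <= length (filter out_of_range l))%nat.
Proof.
  revert k; induction l as [|y l IH]; intros k Hs Hk Hgt; simpl in *; [lia|].
  inversion Hs as [|? ? Hl Hy]; subst.
  destruct k as [|k].
  - assert (Hbad : out_of_range y = true).
    { unfold out_of_range, in_range.
      destruct (Rle_dec a y); [destruct (Rle_dec y b); [lra|]|]; reflexivity. }
    rewrite Hbad. simpl. destruct l as [|z l]; simpl; [lia|].
    assert (y <= z) by (inversion Hy; auto).
    specialize (IH 0%nat Hl ltac:(simpl; lia) ltac:(simpl; lra)). simpl in IH. lia.
  - specialize (IH k Hl ltac:(lia) Hgt).
    destruct (out_of_range y); simpl; lia.
Qed.

Lemma median_out_of_range_count l : ~ (a <= median l <= b) ->
  (length l <= 2 * length (filter out_of_range l))%nat.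
Proof.
  intro Hout. unfold median in Hout.
  destruct (Nat.eq_dec (length l) 0) as [E|E]; [lia|].
  set (k := (length l / 2)%nat) in *.
  assert (Hk : (k < length (sortR l))%nat).
  { rewrite length_sortR. apply Nat.div_lt; lia. }
  assert (Hhalf : (2 * k <= length l < 2 * k + 2)%nat).
  { unfold k. pose proof (Nat.div_mod (length l) 2). pose proof (Nat.mod_upper_bound (length l) 2). lia. }
  rewrite <- (count_sortR out_of_range).
  destruct (Rlt_dec (nth k (sortR l) 0) a) as [Hlt|Hge].
  - pose proof (sorted_nth_below_count _ k (sorted_sortR l) Hk Hlt). lia.
  - assert (Hgt : b < nth k (sortR l) 0) by (destruct (Rle_dec (nth k (sortR l) 0) b); lra).
    pose proof (sorted_nth_above_count _ k (sorted_sortR l) Hk Hgt).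
    rewrite length_sortR in *. lia.
Qed.

(* An exponential moment of the number of bad groups: since [16 = 4 ^ 2], a
   median outside [[a, b]] forces the product of penalties of [g] groups up to
   [4 ^ g] (the Chernoff form of the median trick). *)
Definition median_penalty (v : R) : R := if in_range a b v then 1 else 16.

Lemma median_penalty_nonneg v : 0 <= median_penalty v.
Proof. unfold median_penalty. destruct (in_range a b v); lra. Qed.

Lemma Rprod_median_penalty l :
  Rprod (map median_penalty l) = 16 ^ length (filter out_of_range l).
Proof.
  induction l as [|v l IH]; simpl; auto. rewrite IH. unfold median_penalty, out_of_range.
  destruct (in_range a b v); simpl; ring.
Qed.

Lemma median_out_of_range_penalty l : ~ (a <= median l <= b) ->
  4 ^ length l <= Rprod (map median_penalty l).
Proof.
  intro Hout. rewrite Rprod_median_penalty. replace 16 with (4 ^ 2) by ring. rewrite <- pow_mult.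
  apply Rle_pow; [lra | exact (median_out_of_range_count l Hout)].
Qed.

End MedianTrick.

Lemma indicator_map_eq (a b : nat -> nat) l :
  (if list_eq_dec Nat.eq_dec (map a l) (map b l) then 1 else 0) =
  Rprod (map (fun j => if Nat.eq_dec (a j) (b j) then 1 else 0) l).
Proof.
  induction l as [|j l IH]; cbn [map].
  - destruct (list_eq_dec Nat.eq_dec [] []) as [_|N]; [reflexivity | congruence].
  - change (Rprod (?x :: ?r)) with (x * Rprod r). rewrite <- IH.
    destruct (Nat.eq_dec (a j) (b j)) as [E|E];
    destruct (list_eq_dec Nat.eq_dec (map a l) (map b l)) as [E2|E2];
    destruct (list_eq_dec Nat.eq_dec (a j :: map a l) (b j :: map b l)) as [E3|E3];
    try ring; exfalso; [apply E3; congruence | injection E3; congruence ..].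
Qed.

Lemma le_sqrt_mul u a b : 0 <= a -> 0 <= b -> u <= a -> u <= b -> u <= sqrt a * sqrt b.
Proof.
  intros Ha Hb Hua Hub.
  pose proof (sqrt_sqrt a Ha). pose proof (sqrt_sqrt b Hb).
  pose proof (sqrt_pos a). pose proof (sqrt_pos b).
  destruct (Rle_dec a b).
  - assert (sqrt a <= sqrt b) by (apply sqrt_le_1_alt; lra). nra.
  - assert (sqrt b <= sqrt a) by (apply sqrt_le_1_alt; lra). nra.
Qed.

Definition row_estimate hs p (D : list (list R)) q (l : nat) (s : list nat) : R :=
  INR (counter hs p D s l (row_hash hs p s l q)) / INR (length D).

Definition group_estimate hs p D q (m : nat) (s : list nat) : R :=
  / INR m * Rsum (map (fun l => row_estimate hs p D q l s) (seq 0 m)).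

Definition row0_collides hs p q (x : list R) (s : list nat) : R :=
  if list_eq_dec Nat.eq_dec (row_hash hs p s 0 x) (row_hash hs p s 0 q) then 1 else 0.

Section RowEstimates.

Variable hs : nat -> list R -> nat.
Variable p : nat.
Variable D : list (list R).
Variable q : list R.

Lemma row_hash_skipn s a l x :
  row_hash hs p s (a + l) x = row_hash hs p (skipn (a * p) s) l x.
Proof.
  unfold row_hash. apply map_ext; intro j. rewrite nth_skipn.
  do 2 f_equal. nia.
Qed.

Lemma row_hash_firstn s k l x : (l * p + p <= k)%nat ->
  row_hash hs p s l x = row_hash hs p (firstn k s) l x.
Proof.
  intro Hk. unfold row_hash. apply map_ext_in; intros j Hj. apply in_seq in Hj.
  rewrite nth_firstn. destruct (Nat.ltb_spec (l * p + j) k); [reflexivity | lia].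
Qed.

Lemma row_estimate_ext s s' l l' :
  (forall x, row_hash hs p s l x = row_hash hs p s' l' x) ->
  row_estimate hs p D q l s = row_estimate hs p D q l' s'.
Proof.
  intro H. unfold row_estimate, counter. rewrite !H.
  do 3 f_equal. apply filter_ext. intro x. rewrite H. reflexivity.
Qed.

Lemma row_estimate_succ l s :
  row_estimate hs p D q (S l) s = row_estimate hs p D q l (skipn p s).
Proof.
  apply row_estimate_ext. intro x.
  pose proof (row_hash_skipn s 1 l x) as E. rewrite Nat.mul_1_l in E. exact E.
Qed.

Lemma row_estimate0_firstn s :
  row_estimate hs p D q 0 s = row_estimate hs p D q 0 (firstn p s).
Proof. apply row_estimate_ext. intro x. apply row_hash_firstn. lia. Qed.

Lemma group_mean_skipn s m j :
  group_mean hs p D q s m j = group_estimate hs p D q m (skipn (j * m * p) s).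
Proof.
  unfold group_mean, group_estimate. f_equal. apply Rsum_map_ext; intros i _.
  apply (row_estimate_ext s _ (j * m + i) i). intro x. apply row_hash_skipn.
Qed.

Lemma group_estimate_firstn m s :
  group_estimate hs p D q m s = group_estimate hs p D q m (firstn (m * p) s).
Proof.
  unfold group_estimate. f_equal. apply Rsum_map_ext; intros i Hi. apply in_seq in Hi.
  apply row_estimate_ext. intro x. apply row_hash_firstn. nia.
Qed.

Lemma row_estimate0_sum s :
  row_estimate hs p D q 0 s = / INR (length D) * Rsum (map (fun x => row0_collides hs p q x s) D).
Proof.
  unfold row_estimate, Rdiv. rewrite Rmult_comm. f_equal.
  unfold counter, row0_collides. induction D as [|x D' IH]; simpl; auto.
  destruct (list_eq_dec Nat.eq_dec (row_hash hs p s 0 x) (row_hash hs p s 0 q));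
    simpl length; [rewrite S_INR|]; lra.
Qed.

Lemma row0_collides_01 x s : row0_collides hs p q x s = 0 \/ row0_collides hs p q x s = 1.
Proof. unfold row0_collides. destruct (list_eq_dec _ _ _); auto. Qed.

Variable n : nat.
Variable w : nat -> R.
Hypothesis w_nonneg : forall i, (i < n)%nat -> 0 <= w i.
Hypothesis w_sum1 : Rsum (map w (seq 0 n)) = 1.

Lemma expect_row0_collides x : expect n w p (row0_collides hs p q x) = collision n hs w x q ^ p.
Proof.
  unfold collision. rewrite <- expect_prod_coords.
  apply expect_ext. intro s. unfold row0_collides, row_hash.
  rewrite indicator_map_eq. reflexivity.
Qed.

Lemma collision_bounds x y : 0 <= collision n hs w x y <= 1.
Proof.
  unfold collision. rewrite <- w_sum1. split.
  - apply Rle_trans with (Rsum (map (fun _ => 0) (seq 0 n))).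
    { rewrite Rsum_map_const. lra. }
    apply Rsum_map_le. intros i Hi. apply in_seq in Hi.
    specialize (w_nonneg i ltac:(lia)). destruct (Nat.eq_dec (hs i x) (hs i y)); nra.
  - apply Rsum_map_le. intros i Hi. apply in_seq in Hi.
    specialize (w_nonneg i ltac:(lia)). destruct (Nat.eq_dec (hs i x) (hs i y)); nra.
Qed.

Lemma expect_row_estimate0 : expect n w p (row_estimate hs p D q 0) = Kp n hs w p D q.
Proof.
  rewrite (expect_ext _ _ _ _ _ row_estimate0_sum), expect_scal, expect_sum.
  unfold Kp. f_equal. apply Rsum_map_ext. intros x _. apply expect_row0_collides.
Qed.

Lemma expect_row_estimate0_sq :
  expect n w p (fun s => row_estimate hs p D q 0 s ^ 2) <= Ktilde n hs w p D q ^ 2.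
Proof.
  set (N := / INR (length D)).
  assert (HN : 0 <= N) by apply inv_INR_nonneg.
  rewrite (expect_ext _ _ _ _ (fun s => (N * N) *
     Rsum (map (fun x => Rsum (map (fun y => row0_collides hs p q x s * row0_collides hs p q y s) D)) D))).
  2:{ intro s. rewrite row_estimate0_sum. fold N. rewrite <- Rsum_map_mult. ring. }
  unfold Ktilde. fold N. rewrite <- Rsqr_pow2, Rsqr_mult. unfold Rsqr.
  rewrite Rsum_map_mult, expect_scal, expect_sum.
  apply Rmult_le_compat_l; [nra|].
  apply Rsum_map_le; intros x _. rewrite expect_sum. apply Rsum_map_le; intros y _.
  assert (Hc : forall z, 0 <= collision n hs w z q ^ p)
    by (intro z; apply pow_le, collision_bounds).
  apply le_sqrt_mul; auto; rewrite <- expect_row0_collides; apply expect_le; auto; intro s;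
    destruct (row0_collides_01 x s) as [-> | ->]; destruct (row0_collides_01 y s) as [-> | ->]; lra.
Qed.

Lemma Kp_le_Ktilde : Kp n hs w p D q <= Ktilde n hs w p D q.
Proof.
  unfold Kp, Ktilde.
  apply Rmult_le_compat_l; [apply inv_INR_nonneg|].
  apply Rsum_map_le; intros x _.
  destruct (collision_bounds x q) as [c0 c1].
  set (u := collision n hs w x q ^ p).
  assert (0 <= u) by (apply pow_le; auto).
  assert (u <= 1) by (unfold u; rewrite <- (pow1 p); apply pow_incr; lra).
  pose proof (sqrt_sqrt u ltac:(lra)). pose proof (sqrt_pos u).
  assert (sqrt u <= 1) by (rewrite <- sqrt_1; apply sqrt_le_1_alt; lra).
  nra.
Qed.

End RowEstimates.

Lemma inv_pow2_le (delta : R) (g : nat) : 0 < delta ->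
  INR g >= / ln 2 * ln (1 / delta) -> / 2 ^ g <= delta.
Proof.
  intros Hdelta Hg.
  assert (Hln2 : 0 < ln 2) by (pose proof ln_lt_2; lra).
  assert (H2g : 0 < 2 ^ g) by (apply pow_lt; lra).
  assert (Hinv : 1 / delta <= 2 ^ g).
  { destruct (Rle_lt_dec (1 / delta) (2 ^ g)) as [|Hlt]; auto.
    apply ln_increasing in Hlt; auto. rewrite ln_pow in Hlt by lra.
    assert (INR g * ln 2 >= ln (1 / delta)); [|lra].
    replace (ln (1 / delta)) with (/ ln 2 * ln (1 / delta) * ln 2) by (field; lra).
    apply Rmult_ge_compat_r; lra. }
  replace delta with (/ (1 / delta)) by (field; lra).
  apply Rinv_le_contravar; [apply Rdiv_lt_0_compat; lra | exact Hinv].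
Qed.

Section Concentration.

Variable n : nat.
Variable hs : nat -> list R -> nat.
Variable w : nat -> R.
Variable p : nat.
Variable D : list (list R).
Variable q : list R.
Hypothesis w_nonneg : forall i, (i < n)%nat -> 0 <= w i.
Hypothesis w_sum1 : Rsum (map w (seq 0 n)) = 1.

Let K := Kp n hs w p D q.
Let Kt := Ktilde n hs w p D q.

Lemma expect_group_estimate_sq_dev m : (0 < m)%nat ->
  expect n w (m * p) (fun s => (group_estimate hs p D q m s - K) ^ 2) <= Kt ^ 2 / INR m.
Proof.
  intro Hm. apply lt_0_INR in Hm.
  rewrite (expect_ext _ _ _ _ (fun s => / INR m ^ 2 *
    Rsum (map (fun i => row_estimate hs p D q i s - K) (seq 0 m)) ^ 2)).
  2:{ intro s. unfold group_estimate. rewrite Rsum_map_minus_const, length_seq.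
      field. lra. }
  rewrite expect_scal.
  pose proof (expect_sq_sum_iid_centered n w w_sum1 p (row_estimate hs p D q)
    K (Kt ^ 2) (row_estimate_succ hs p D q) (row_estimate0_firstn hs p D q)
    (expect_row_estimate0 hs p D q n w) (expect_row_estimate0_sq hs p D q n w w_nonneg w_sum1) m).
  apply Rle_trans with (/ INR m ^ 2 * (INR m * Kt ^ 2)).
  - apply Rmult_le_compat_l; auto. left. apply Rinv_0_lt_compat, pow_lt. lra.
  - right. field. lra.
Qed.

Variable eps : R.
Hypothesis eps_pos : 0 < eps.
Hypothesis K_pos : K > 0.

Lemma group_estimate_out_of_range_prob m :
  INR m >= 16 * (Kt / K) ^ 2 / eps ^ 2 ->
  expect n w (m * p)
    (fun s => if in_range ((1 - eps) * K) ((1 + eps) * K) (group_estimate hs p D q m s)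
              then 0 else 1) <= / 16.
Proof.
  intro Hm.
  assert (HKt : K <= Kt) by exact (Kp_le_Ktilde hs p D q n w w_nonneg w_sum1).
  assert (Hm16 : 16 * Kt ^ 2 <= INR m * (eps * K) ^ 2).
  { assert (E : 16 * (Kt / K) ^ 2 / eps ^ 2 * (eps * K) ^ 2 = 16 * Kt ^ 2) by (field; lra).
    rewrite <- E. apply Rmult_le_compat_r; [apply pow2_ge_0 | lra]. }
  assert (HmR : 0 < INR m).
  { assert (0 < Kt ^ 2) by (apply pow_lt; lra).
    destruct m; [simpl in Hm16; lra | apply lt_0_INR; lia]. }
  assert (Hm0 : (0 < m)%nat) by (apply INR_lt; simpl; lra).
  replace ((1 - eps) * K) with (K - eps * K) by ring.
  replace ((1 + eps) * K) with (K + eps * K) by ring.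
  eapply Rle_trans; [apply expect_chebyshev; auto; nra|].
  apply Rle_trans with (Kt ^ 2 / INR m / (eps * K) ^ 2).
  - unfold Rdiv. apply Rmult_le_compat_r.
    + left. apply Rinv_0_lt_compat, pow_lt. nra.
    + exact (expect_group_estimate_sq_dev m Hm0).
  - assert (0 < (eps * K) ^ 2) by (apply pow_lt; nra).
    unfold Rdiv. rewrite Rmult_assoc, <- Rinv_mult.
    apply (Rmult_le_reg_r (INR m * (eps * K) ^ 2)); [nra|].
    rewrite Rmult_assoc, Rinv_l by nra. lra.
Qed.

Lemma expect_group_penalty_le2 m :
  INR m >= 16 * (Kt / K) ^ 2 / eps ^ 2 ->
  expect n w (m * p)
    (fun s => median_penalty ((1 - eps) * K) ((1 + eps) * K) (group_estimate hs p D q m s)) <= 2.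
Proof.
  intro Hm.
  rewrite (expect_ext _ _ _ _ (fun s => 1 + 15 *
    (if in_range ((1 - eps) * K) ((1 + eps) * K) (group_estimate hs p D q m s) then 0 else 1))).
  - rewrite expect_plus, expect_scal, expect_const by auto.
    pose proof (group_estimate_out_of_range_prob m Hm). lra.
  - intro s. unfold median_penalty. destruct (in_range _ _ _); ring.
Qed.

Definition group_penalty_product (g m : nat) (s : list nat) : R :=
  Rprod (map (fun j => median_penalty ((1 - eps) * K) ((1 + eps) * K)
                         (group_estimate hs p D q m (skipn (j * (m * p)) s))) (seq 0 g)).

Lemma group_penalty_product_nonneg g m s : 0 <= group_penalty_product g m s.
Proof.
  apply Rprod_nonneg, Forall_forall. intros x Hx.
  apply in_map_iff in Hx. destruct Hx as [j [<- _]]. apply median_penalty_nonneg.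
Qed.

Lemma race_estimate_out_of_range_penalty g m s :
  ~ within_eps hs p D q g m eps K s -> 4 ^ g <= group_penalty_product g m s.
Proof.
  intro Hout. unfold within_eps, race_estimate in Hout.
  apply median_out_of_range_penalty in Hout.
  rewrite length_map, length_seq, map_map in Hout.
  unfold group_penalty_product. erewrite map_ext; [exact Hout|].
  intro j. cbv beta. rewrite group_mean_skipn, Nat.mul_assoc. reflexivity.
Qed.

Lemma expect_group_penalty_product g m :
  INR m >= 16 * (Kt / K) ^ 2 / eps ^ 2 ->
  expect n w (g * (m * p)) (group_penalty_product g m) <= 2 ^ g.
Proof.
  intro Hm. set (penalty := median_penalty ((1 - eps) * K) ((1 + eps) * K)).
  unfold group_penalty_product. fold penalty.
  rewrite (expect_blocks n w (m * p) (fun s => penalty (group_estimate hs p D q m s))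
    (fun s => f_equal penalty (group_estimate_firstn hs p D q m s)) g).
  apply pow_incr. split.
  - rewrite <- (expect_const n w w_sum1 (m * p) 0).
    apply expect_le; auto. intro s. apply median_penalty_nonneg.
  - exact (expect_group_penalty_le2 m Hm).
Qed.

Theorem race_estimate_concentration delta g m :
  0 < delta ->
  INR g >= / ln 2 * ln (1 / delta) ->
  INR m >= 16 * (Kt / K) ^ 2 / eps ^ 2 ->
  prob_draws n w (g * m * p) (within_eps hs p D q g m eps K)
    (within_eps_dec hs p D q g m eps K) >= 1 - delta.
Proof.
  intros Hdelta Hg Hm.
  assert (H4g : 0 < 4 ^ g) by (apply pow_lt; lra).
  apply Rle_ge. eapply Rle_trans;
    [|apply (prob_draws_markov n w w_nonneg w_sum1 _ _ _ _ (4 ^ g) H4g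
               (group_penalty_product_nonneg g m) (race_estimate_out_of_range_penalty g m))].
  rewrite <- Nat.mul_assoc.
  assert (Hquot : 2 ^ g / 4 ^ g = / 2 ^ g).
  { replace 4 with (2 * 2) by ring. rewrite Rpow_mult_distr. field. apply pow_nonzero. lra. }
  assert (2 ^ g / 4 ^ g >= expect n w (g * (m * p)) (group_penalty_product g m) / 4 ^ g).
  { apply Rle_ge, Rmult_le_compat_r; [left; apply Rinv_0_lt_compat; lra|].
    exact (expect_group_penalty_product g m Hm). }
  pose proof (inv_pow2_le delta g Hdelta Hg). lra.
Qed.

End Concentration.

Theorem mainTheorem1 :
  exists c1 c2 : R, 0 < c1 /\ 0 < c2 /\
  forall (d n : nat) (hs : nat -> list R -> nat) (w : nat -> R) (r p : nat)
         (D : list (list R)) (q : list R) (eps delta : R) (g m : nat),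
    (forall i, (i < n)%nat -> 0 <= w i) ->
    Rsum (map w (seq 0 n)) = 1 ->
    (forall i x, (i < n)%nat -> length x = d -> (1 <= hs i x <= r)%nat) ->
    (1 <= p)%nat ->
    NoDup D ->
    Forall (fun x => length x = d) D ->
    length q = d ->
    0 < eps < 1 -> 0 < delta < 1 ->
    Kp n hs w p D q > 0 ->
    INR g >= c1 * ln (1 / delta) ->
    INR m >= c2 * (Ktilde n hs w p D q / Kp n hs w p D q) ^ 2 / eps ^ 2 ->
    prob_draws n w (g * m * p)
      (within_eps hs p D q g m eps (Kp n hs w p D q))
      (within_eps_dec hs p D q g m eps (Kp n hs w p D q))
    >= 1 - delta.
Proof.
  exists (/ ln 2), 16.
  pose proof ln_lt_2.
  split; [apply Rinv_0_lt_compat; lra | split; [lra|]].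
  intros d n hs w r p D q eps delta g m Hw Hw1 _ _ _ _ _ Heps Hdelta HK Hg Hm.
  apply race_estimate_concentration; auto; lra.
Qed.
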